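(* Suppose $\{x\in\mathbb{R}^n:A^\top x\le u\}=\emptyset$. Let $\mathcal{D}:=\{\lambda\in\mathbb{R}^m: A\lambda=0,\ \lambda\ge0,\ u^\top\lambda<0,\ \|\lambda\|\le1\}$, and let $r^*$ be the supremum of all $r$ for which there exists $\lambda^c$ with $A\lambda^c=0$ and $B(\lambda^c,r)\cap\mathrm{Null}(A)\subseteq\mathcal{D}$. Then $$\frac{\|P_Au\|}{\tau(A,u)\sqrt m}+1\ \le\ \frac1{r^*}\ \le\ \Big(\frac{\|P_Au\|}{\tau(A,u)}+1\Big)\Big(\frac{m}{\rho(A)}+\sqrt m+1\Big).$$
   Context: $A=[a_1|\cdots|a_m]\in\mathbb{R}^{n\times m}$ has columns of unit Euclidean norm and $\{A\lambda:\lambda\ge0\}=\mathbb{R}^n$; $u\in\mathbb{R}^m$. $\|\cdot\|$ is the Euclidean norm, $B(c,r)$ the closed Euclidean ball in $\mathbb{R}^m$, $\mathrm{Null}(A)$ the nullspace of $A$, and $P_A:=I-A^\top(AA^\top)^{-1}A$. $\tau(A,u):=|z^*|$ with $z^*:=\max_x\min_i(u_i-a_i^\top x)$. $\|M\|_{1,2}:=\max_{\|w\|_1=1}\|Mw\|_2$ and $\rho(A):=\min_{\Delta A}\{\|\Delta A\|_{1,2}:\exists v\ne0,\ (A+\Delta A)^\top v\le0\}$ (if $\rho(A)=0$ the upper bound is read as $+\infty$). *)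

From Stdlib Require Import Reals Lra Lia Classical ClassicalEpsilon.
Open Scope R_scope.

(* Vectors in R^k are functions nat -> R; only indices < k matter.
   A matrix A in R^{n x m} is a function nat -> nat -> R, entry A i j
   (row i < n, column j < m); column a_j = (fun i => A i j). *)

Fixpoint rsum (k : nat) (f : nat -> R) : R :=
  match k with
  | O => 0
  | S k' => rsum k' f + f k'
  end.

Definition norm2 (k : nat) (v : nat -> R) : R := sqrt (rsum k (fun i => v i * v i)).
Definition norm1 (k : nat) (v : nat -> R) : R := rsum k (fun i => Rabs (v i)).

Definition matvec (m : nat) (A : nat -> nat -> R) (lam : nat -> R) : nat -> R :=
  fun i => rsum m (fun j => A i j * lam j).
Definition tmatvec (n : nat) (A : nat -> nat -> R) (x : nat -> R) : nat -> R :=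
  fun j => rsum n (fun i => A i j * x i).

(* min_{i<k} f i  (k >= 1; for k = 0 it returns f 0, never used) *)
Fixpoint rmin_upto (k : nat) (f : nat -> R) : R :=
  match k with
  | O => f O
  | S k' => Rmin (rmin_upto k' f) (f (S k'))
  end.
Definition rmin_idx (k : nat) (f : nat -> R) : R := rmin_upto (pred k) f.

(* Supremum of a set of reals (least upper bound when it exists, 0 otherwise),
   and infimum. *)
Definition Rsup (S : R -> Prop) : R :=
  match excluded_middle_informative (exists l, is_lub S l) with
  | left H => proj1_sig (constructive_indefinite_description _ H)
  | right _ => 0
  end.
Definition Rinf (S : R -> Prop) : R := - Rsup (fun x => S (- x)).

Definition zstar (n m : nat) (A : nat -> nat -> R) (u : nat -> R) : R :=
  Rsup (fun z => exists x : nat -> R,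
          z = rmin_idx m (fun i => u i - tmatvec n A x i)).
Definition tau (n m : nat) (A : nat -> nat -> R) (u : nat -> R) : R :=
  Rabs (zstar n m A u).

Definition norm12 (n m : nat) (M : nat -> nat -> R) : R :=
  Rsup (fun y => exists w : nat -> R, norm1 m w = 1 /\ y = norm2 n (matvec m M w)).

Definition rho (n m : nat) (A : nat -> nat -> R) : R :=
  Rinf (fun y => exists (DA : nat -> nat -> R) (v : nat -> R),
          (exists i, (i < n)%nat /\ v i <> 0) /\
          (forall j, (j < m)%nat ->
             tmatvec n (fun i j => A i j + DA i j) v j <= 0) /\
          y = norm12 n m DA).

Definition in_null (n m : nat) (A : nat -> nat -> R) (lam : nat -> R) : Prop :=
  forall i, (i < n)%nat -> matvec m A lam i = 0.

Definition in_D (n m : nat) (A : nat -> nat -> R) (u lam : nat -> R) : Prop :=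
  in_null n m A lam /\
  (forall j, (j < m)%nat -> 0 <= lam j) /\
  rsum m (fun j => u j * lam j) < 0 /\
  norm2 m lam <= 1.

Definition rstar (n m : nat) (A : nat -> nat -> R) (u : nat -> R) : R :=
  Rsup (fun r => exists lc : nat -> R, in_null n m A lc /\
          forall lam, in_null n m A lam ->
            norm2 m (fun j => lam j - lc j) <= r -> in_D n m A u lam).

(* For [lam] in Null(A) one has [u . lam = P_A u . lam].
   Lower bound: if the ball of radius [r] around [lc] (within Null(A)) lies in D,
   then moving from [lc] by [r] along [lc] and along [P_A u] stays in D, so
   [||lc|| + r <= 1] and [r ||P_A u|| <= - u . lc <= tau sum lc <= tau sqrt m (1 - r)],
   where [- u . lc <= tau sum lc] is weak duality [z^* <= u . lam / sum lam].
   Upper bound: the ball of radius [r] around [(1 - r (K+1)) l0 + r lb] lies in D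
   whenever [r (K+1) (||P_A u|| + tau) < tau], where [l0] is a normalized dual point
   with [u . l0] close to [z^* = - tau] (approximate strong duality, from Farkas'
   lemma proved by Fourier-Motzkin elimination) and [lb >= 1] is a point of Null(A)
   with [||lb|| <= K = m / rho + sqrt m].  Such an [lb] exists because a Farkas
   certificate against it would yield a perturbation of [A] of size less than [rho]
   under which some [v <> 0] has [(A + DA)^T v <= 0]. *)

From Stdlib Require Import Reals Lra Lia Psatz List Classical ClassicalEpsilon.
Import ListNotations.
Open Scope R_scope.

(** * Finite sums and the Euclidean norm *)

Lemma rsum_ext k f g : (forall i, (i < k)%nat -> f i = g i) -> rsum k f = rsum k g.
Proof.
  induction k as [|k IH]; simpl; intros H; auto.
  rewrite IH by (intros; apply H; lia). rewrite H by lia. reflexivity.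
Qed.

Lemma rsum_add k f g : rsum k (fun i => f i + g i) = rsum k f + rsum k g.
Proof. induction k; simpl; [lra|rewrite IHk; lra]. Qed.

Lemma rsum_sub k f g : rsum k (fun i => f i - g i) = rsum k f - rsum k g.
Proof. induction k; simpl; [lra|rewrite IHk; lra]. Qed.

Lemma rsum_scal k c f : rsum k (fun i => c * f i) = c * rsum k f.
Proof. induction k; simpl; [lra|rewrite IHk; lra]. Qed.

Lemma rsum_0 k : rsum k (fun _ => 0) = 0.
Proof. induction k; simpl; [lra|rewrite IHk; lra]. Qed.

Lemma rsum_1 k : rsum k (fun _ => 1) = INR k.
Proof. induction k; simpl; [auto|]. rewrite IHk. destruct k; simpl; lra. Qed.

Lemma rsum_lin k (c f g : nat -> R) a b :
  rsum k (fun j => c j * (a * f j + b * g j))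
  = a * rsum k (fun j => c j * f j) + b * rsum k (fun j => c j * g j).
Proof.
  rewrite (rsum_ext k _ (fun j => a * (c j * f j) + b * (c j * g j))) by (intros; ring).
  rewrite rsum_add, !rsum_scal. reflexivity.
Qed.

Lemma rsum_le k f g : (forall i, (i < k)%nat -> f i <= g i) -> rsum k f <= rsum k g.
Proof.
  induction k; simpl; intros H; [lra|].
  pose proof (H k ltac:(lia)). pose proof (IHk ltac:(intros; apply H; lia)). lra.
Qed.

Lemma rsum_ge0 k f : (forall i, (i < k)%nat -> 0 <= f i) -> 0 <= rsum k f.
Proof. intros H. rewrite <- (rsum_0 k). apply rsum_le; auto. Qed.

Lemma rsum_ge_term k f j :
  (forall i, (i < k)%nat -> 0 <= f i) -> (j < k)%nat -> f j <= rsum k f.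
Proof.
  induction k; simpl; intros H Hj; [lia|].
  pose proof (H k ltac:(lia)).
  destruct (Nat.eq_dec j k) as [->|].
  - pose proof (rsum_ge0 k f ltac:(intros; apply H; lia)). lra.
  - pose proof (IHk ltac:(intros; apply H; lia) ltac:(lia)). lra.
Qed.

Lemma rsum_swap n m (F : nat -> nat -> R) :
  rsum n (fun i => rsum m (fun j => F i j)) = rsum m (fun j => rsum n (fun i => F i j)).
Proof.
  induction n; simpl.
  - rewrite rsum_0; auto.
  - rewrite IHn, <- rsum_add. reflexivity.
Qed.

Lemma rsum_abs_le k f : Rabs (rsum k f) <= rsum k (fun i => Rabs (f i)).
Proof.
  induction k; simpl.
  - rewrite Rabs_R0; lra.
  - eapply Rle_trans; [apply Rabs_triang|lra].
Qed.

Definition delta (i : nat) : nat -> R := fun k => if Nat.eqb k i then 1 else 0.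

Lemma rsum_delta k f i : (i < k)%nat -> rsum k (fun j => f j * delta i j) = f i.
Proof.
  unfold delta. induction k; simpl; intros H; [lia|].
  destruct (Nat.eq_dec i k) as [->|].
  - rewrite Nat.eqb_refl, (rsum_ext k _ (fun _ => 0)), rsum_0; [ring|].
    intros j Hj. destruct (Nat.eqb_spec j k); [lia|ring].
  - rewrite IHk by lia. destruct (Nat.eqb_spec k i); [lia|ring].
Qed.

Lemma rsum_pos_of_dot_neq0 m (lam c : nat -> R) :
  (forall j, (j < m)%nat -> 0 <= lam j) ->
  rsum m (fun j => c j * lam j) <> 0 -> 0 < rsum m lam.
Proof.
  intros H Hc. destruct (Rle_lt_or_eq_dec 0 _ (rsum_ge0 m lam H)) as [|E]; auto.
  exfalso. apply Hc. rewrite (rsum_ext m _ (fun _ => 0)) by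
    (intros j Hj; pose proof (rsum_ge_term m lam j H Hj); pose proof (H j Hj);
     replace (lam j) with 0 by lra; ring).
  apply rsum_0.
Qed.

Lemma abs_bounds x : - Rabs x <= x <= Rabs x.
Proof. unfold Rabs; destruct (Rcase_abs x); lra. Qed.

Lemma sumsq_ge0 k v : 0 <= rsum k (fun i => v i * v i).
Proof. apply rsum_ge0. intros; nra. Qed.

Lemma norm2_ge0 k v : 0 <= norm2 k v.
Proof. apply sqrt_pos. Qed.

Lemma norm2_sq k v : norm2 k v * norm2 k v = rsum k (fun i => v i * v i).
Proof. apply sqrt_sqrt, sumsq_ge0. Qed.

Lemma norm2_ext k f g : (forall i, (i < k)%nat -> f i = g i) -> norm2 k f = norm2 k g.
Proof. intros H. unfold norm2. f_equal. apply rsum_ext. intros; rewrite H; auto. Qed.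

Lemma cauchy_schwarz_sq k f g :
  rsum k (fun i => f i * g i) * rsum k (fun i => f i * g i)
  <= rsum k (fun i => f i * f i) * rsum k (fun i => g i * g i).
Proof.
  set (a := rsum k (fun i => f i * f i)).
  set (b := rsum k (fun i => f i * g i)).
  set (c := rsum k (fun i => g i * g i)).
  assert (Hq : forall t, 0 <= a + 2 * t * b + t * t * c).
  { intros t. replace (a + 2 * t * b + t * t * c)
      with (rsum k (fun i => (f i + t * g i) * (f i + t * g i))) by
      (unfold a, b, c; rewrite <- !rsum_scal, <- !rsum_add; apply rsum_ext; intros; ring).
    apply sumsq_ge0. }
  assert (Ha : 0 <= a) by apply sumsq_ge0.
  assert (Hc : 0 <= c) by apply sumsq_ge0.
  destruct (Req_dec c 0) as [Hc0|Hc0].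
  - destruct (Req_dec b 0) as [Hb0|Hb0]; [rewrite Hb0, Hc0; lra|].
    exfalso. pose proof (Hq (- (a + 1) / (2 * b))) as H.
    replace (a + 2 * (- (a + 1) / (2 * b)) * b + (- (a + 1) / (2 * b)) * (- (a + 1) / (2 * b)) * c)
      with (-1) in H by (rewrite Hc0; field; auto). lra.
  - pose proof (Hq (- b / c)) as H.
    replace (a + 2 * (- b / c) * b + (- b / c) * (- b / c) * c) with ((a * c - b * b) / c)
      in H by (field; auto).
    apply (Rmult_le_compat_r c) in H; [|lra].
    unfold Rdiv in H. rewrite Rmult_assoc, Rinv_l in H by auto. lra.
Qed.

Lemma cauchy_schwarz k f g : Rabs (rsum k (fun i => f i * g i)) <= norm2 k f * norm2 k g.
Proof.
  pose proof (norm2_ge0 k f). pose proof (norm2_ge0 k g).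
  apply Rsqr_incr_0_var; [|apply Rmult_le_pos; auto].
  unfold Rsqr. rewrite <- Rabs_mult, Rabs_pos_eq by nra.
  replace (norm2 k f * norm2 k g * (norm2 k f * norm2 k g))
    with (norm2 k f * norm2 k f * (norm2 k g * norm2 k g)) by ring.
  rewrite !norm2_sq. apply cauchy_schwarz_sq.
Qed.

Lemma norm2_triangle k f g : norm2 k (fun i => f i + g i) <= norm2 k f + norm2 k g.
Proof.
  pose proof (norm2_ge0 k f). pose proof (norm2_ge0 k g).
  apply Rsqr_incr_0_var; [|lra]. unfold Rsqr. rewrite norm2_sq.
  replace (rsum k (fun i => (f i + g i) * (f i + g i))) with
    (rsum k (fun i => f i * f i) + 2 * rsum k (fun i => f i * g i) + rsum k (fun i => g i * g i))
    by (rewrite <- rsum_scal, <- !rsum_add; apply rsum_ext; intros; ring).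
  rewrite <- !norm2_sq.
  pose proof (cauchy_schwarz k f g). pose proof (Rle_abs (rsum k (fun i => f i * g i))). nra.
Qed.

Lemma norm2_scal k c f : norm2 k (fun i => c * f i) = Rabs c * norm2 k f.
Proof.
  unfold norm2. rewrite (rsum_ext k _ (fun i => (c * c) * (f i * f i))) by (intros; ring).
  rewrite rsum_scal, sqrt_mult_alt by nra. f_equal.
  rewrite <- sqrt_Rsqr_abs. reflexivity.
Qed.

Lemma norm2_0 k : norm2 k (fun _ => 0) = 0.
Proof. unfold norm2. rewrite (rsum_ext k _ (fun _ => 0)), rsum_0 by (intros; ring). apply sqrt_0. Qed.

Lemma abs_le_norm2 k f j : (j < k)%nat -> Rabs (f j) <= norm2 k f.
Proof.
  intros Hj. pose proof (norm2_ge0 k f).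
  apply Rsqr_incr_0_var; [|auto]. unfold Rsqr.
  rewrite <- Rabs_mult, Rabs_pos_eq, norm2_sq by nra.
  apply (rsum_ge_term k (fun i => f i * f i)); auto. intros; nra.
Qed.

Lemma norm2_pos k v : (exists i, (i < k)%nat /\ v i <> 0) -> 0 < norm2 k v.
Proof.
  intros [i [Hi Hv]]. pose proof (abs_le_norm2 k v i Hi). pose proof (Rabs_pos_lt _ Hv). lra.
Qed.

Lemma norm2_le_rsum k f : (forall i, (i < k)%nat -> 0 <= f i) -> norm2 k f <= rsum k f.
Proof.
  intros H. apply Rsqr_incr_0_var; [|apply rsum_ge0; auto].
  unfold Rsqr. rewrite norm2_sq.
  induction k; simpl; [lra|].
  pose proof (IHk ltac:(intros; apply H; lia)). pose proof (H k ltac:(lia)).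
  pose proof (rsum_ge0 k f ltac:(intros; apply H; lia)). nra.
Qed.

Lemma norm2_1 k : norm2 k (fun _ => 1) = sqrt (INR k).
Proof. unfold norm2. rewrite (rsum_ext k _ (fun _ => 1)), rsum_1 by (intros; ring). reflexivity. Qed.

Lemma rsum_le_sqrt_norm2 k f : rsum k f <= sqrt (INR k) * norm2 k f.
Proof.
  rewrite <- norm2_1, (rsum_ext k f (fun i => 1 * f i)) by (intros; ring).
  eapply Rle_trans; [apply Rle_abs|apply cauchy_schwarz].
Qed.

(** * Suprema *)

Lemma Rsup_is_lub (S : R -> Prop) :
  (exists x, S x) -> (exists b, forall x, S x -> x <= b) -> is_lub S (Rsup S).
Proof.
  intros Hne [b Hb]. unfold Rsup.
  destruct (excluded_middle_informative (exists l, is_lub S l)) as [H|H].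
  - exact (proj2_sig (constructive_indefinite_description _ H)).
  - exfalso. apply H. destruct (completeness S) as [l Hl]; [exists b; exact Hb|auto|].
    exists l; auto.
Qed.

Lemma Rsup_ge (S : R -> Prop) y : S y -> (exists b, forall x, S x -> x <= b) -> y <= Rsup S.
Proof. intros Hy Hb. apply (Rsup_is_lub S ltac:(eauto) Hb); auto. Qed.

Lemma Rsup_le (S : R -> Prop) b : (exists x, S x) -> (forall x, S x -> x <= b) -> Rsup S <= b.
Proof. intros Hne Hb. apply (Rsup_is_lub S Hne ltac:(eauto)); auto. Qed.

(* Holds even when [Rsup S] falls back to its junk value [0]. *)
Lemma Rsup_ge0 (S : R -> Prop) y : S y -> 0 <= y -> 0 <= Rsup S.
Proof.
  intros Hy H0. unfold Rsup.
  destruct (excluded_middle_informative (exists l, is_lub S l)) as [H|H]; [|lra].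
  pose proof (proj2_sig (constructive_indefinite_description _ H)) as [Hl _].
  specialize (Hl y Hy). lra.
Qed.

Lemma lub_ge_of_interval (S : R -> Prop) l s : is_lub S l -> 0 < s ->
  (forall r, 0 <= r < s -> S r) -> s <= l.
Proof.
  intros [Hub _] Hs HS. apply Rnot_lt_le. intros Hl.
  set (r := Rmax 0 ((l + s) / 2)).
  assert (Hr : 0 <= r < s) by (split; [apply Rmax_l|apply Rmax_lub_lt; lra]).
  assert ((l + s) / 2 <= r) by apply Rmax_r.
  pose proof (Hub r (HS r Hr)). lra.
Qed.

(** * Farkas' lemma by Fourier-Motzkin elimination *)

(* A constraint [(g, h)] on [x] in R^k reads [g . x <= h]. *)
Definition constraint := ((nat -> R) * R)%type.
Definition sat (k : nat) (x : nat -> R) (c : constraint) : Prop :=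
  rsum k (fun i => fst c i * x i) <= snd c.

Inductive lin_derivable (L : list constraint) : constraint -> Prop :=
| lin_derivable_in c : In c L -> lin_derivable L c
| lin_derivable_zero : lin_derivable L (fun _ => 0, 0)
| lin_derivable_add g1 h1 g2 h2 : lin_derivable L (g1, h1) -> lin_derivable L (g2, h2) ->
    lin_derivable L (fun i => g1 i + g2 i, h1 + h2)
| lin_derivable_scale a g h : 0 <= a -> lin_derivable L (g, h) ->
    lin_derivable L (fun i => a * g i, a * h).

Lemma lin_derivable_invariant (L : list constraint) (P : constraint -> Prop) :
  P (fun _ => 0, 0) ->
  (forall g1 h1 g2 h2, P (g1, h1) -> P (g2, h2) -> P (fun i => g1 i + g2 i, h1 + h2)) ->
  (forall a g h, 0 <= a -> P (g, h) -> P (fun i => a * g i, a * h)) ->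
  (forall c, In c L -> P c) -> forall c, lin_derivable L c -> P c.
Proof. intros H0 Hadd Hscale Hin c D. induction D; auto. Qed.

Lemma lin_derivable_trans L L' c :
  (forall c', In c' L' -> lin_derivable L c') -> lin_derivable L' c -> lin_derivable L c.
Proof.
  intros H. apply lin_derivable_invariant; auto.
  - apply lin_derivable_zero.
  - intros; apply lin_derivable_add; auto.
  - intros; apply lin_derivable_scale; auto.
Qed.

Definition coef_pos (k : nat) (c : constraint) : bool := if Rlt_dec 0 (fst c k) then true else false.
Definition coef_neg (k : nat) (c : constraint) : bool := if Rlt_dec (fst c k) 0 then true else false.
Definition coef_zero (k : nat) (c : constraint) : bool := if Req_EM_T (fst c k) 0 then true else false.

Definition cancel_coef (k : nat) (p q : constraint) : constraint :=
  (fun i => (- fst q k) * fst p i + fst p k * fst q i, (- fst q k) * snd p + fst p k * snd q).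

Definition fm_elim (k : nat) (L : list constraint) : list constraint :=
  filter (coef_zero k) L ++
  flat_map (fun p => map (cancel_coef k p) (filter (coef_neg k) L)) (filter (coef_pos k) L).

Lemma coef_pos_spec k c : coef_pos k c = true <-> 0 < fst c k.
Proof. unfold coef_pos. destruct (Rlt_dec 0 (fst c k)); split; auto; discriminate. Qed.

Lemma coef_neg_spec k c : coef_neg k c = true <-> fst c k < 0.
Proof. unfold coef_neg. destruct (Rlt_dec (fst c k) 0); split; auto; discriminate. Qed.

Lemma coef_zero_spec k c : coef_zero k c = true <-> fst c k = 0.
Proof. unfold coef_zero. destruct (Req_EM_T (fst c k) 0); split; auto; discriminate. Qed.

Lemma in_fm_elim k L c : In c (fm_elim k L) <->
  (In c L /\ fst c k = 0) \/
  (exists p q, In p L /\ In q L /\ 0 < fst p k /\ fst q k < 0 /\ c = cancel_coef k p q).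
Proof.
  unfold fm_elim. rewrite in_app_iff, filter_In, coef_zero_spec, in_flat_map.
  split; intros [H|H]; auto; right.
  - destruct H as [p [Hp Hc]]. apply in_map_iff in Hc as [q [<- Hq]].
    rewrite filter_In, coef_pos_spec in Hp. rewrite filter_In, coef_neg_spec in Hq.
    exists p, q; tauto.
  - destruct H as [p [q [Hp [Hq [Hpk [Hqk ->]]]]]]. exists p.
    rewrite filter_In, coef_pos_spec. split; auto.
    apply in_map. rewrite filter_In, coef_neg_spec. auto.
Qed.

Lemma fm_elim_lin_derivable k L c : In c (fm_elim k L) -> lin_derivable L c.
Proof.
  intros H. apply in_fm_elim in H as [[H _]|[[gp hp] [[gq hq] [Hp [Hq [Hpk [Hqk ->]]]]]]].
  - apply lin_derivable_in; auto.
  - simpl in *. unfold cancel_coef; simpl.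
    apply (lin_derivable_add L (fun i => - gq k * gp i) (- gq k * hp) (fun i => gp k * gq i) (gp k * hq));
      apply lin_derivable_scale; try lra; apply lin_derivable_in; auto.
Qed.

Lemma fm_elim_coef k L c : In c (fm_elim k L) -> fst c k = 0.
Proof.
  intros H. apply in_fm_elim in H as [[_ H]|[p [q [_ [_ [_ [_ ->]]]]]]]; auto.
  unfold cancel_coef; simpl; ring.
Qed.

Lemma exists_between {T : Type} (lo up : list T) (f g : T -> R) :
  (forall a b, In a lo -> In b up -> f a <= g b) ->
  exists x, (forall a, In a lo -> f a <= x) /\ (forall b, In b up -> x <= g b).
Proof.
  induction lo as [|a lo IH]; intros H.
  - clear H. induction up as [|b up [x0 [_ Hx0]]].
    + exists 0; split; intros; contradiction.
    + exists (Rmin (g b) x0). split; [intros; contradiction|].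
      intros b' [<-|Hb']; [apply Rmin_l|]. eapply Rle_trans; [apply Rmin_r|auto].
  - destruct IH as [x0 [H1 H2]]; [intros; apply H; simpl; auto|].
    exists (Rmax (f a) x0). split.
    + intros a' [<-|Ha']; [apply Rmax_l|]. eapply Rle_trans; [apply H1; auto|apply Rmax_r].
    + intros b Hb. apply Rmax_lub; [apply H; simpl; auto|apply H2; auto].
Qed.

(* A solution of the eliminated system in R^k extends to one of [L] in R^(k+1):
   every constraint with [fst c k < 0] gives a lower bound on [x_k], every one with
   [fst c k > 0] an upper bound, and the cancelled pairs say that each lower bound
   lies below each upper bound. *)
Lemma fm_elim_extend k L x' : (forall c, In c (fm_elim k L) -> sat k x' c) ->
  exists x, forall c, In c L -> sat (S k) x c.
Proof.
  intros Hsat.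
  set (s := fun c : constraint => rsum k (fun i => fst c i * x' i)).
  set (bnd := fun c : constraint => (snd c - s c) / fst c k).
  assert (Hbnd : forall c, fst c k <> 0 -> bnd c * fst c k = snd c - s c)
    by (intros; unfold bnd; field; auto).
  destruct (exists_between (filter (coef_neg k) L) (filter (coef_pos k) L) bnd bnd)
    as [xk [Hlo Hup]].
  { intros q p Hq Hp. rewrite filter_In, coef_neg_spec in Hq. rewrite filter_In, coef_pos_spec in Hp.
    assert (Hc : In (cancel_coef k p q) (fm_elim k L)) by (apply in_fm_elim; right; exists p, q; tauto).
    pose proof (Hsat _ Hc) as Hs. unfold sat, cancel_coef in Hs; simpl in Hs.
    rewrite (rsum_ext k _ (fun i => (- fst q k) * (fst p i * x' i) + fst p k * (fst q i * x' i))),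
      rsum_add, !rsum_scal in Hs by (intros; ring).
    fold (s p) (s q) in Hs.
    pose proof (Hbnd p ltac:(lra)). pose proof (Hbnd q ltac:(lra)).
    apply Rmult_le_reg_l with (r := fst p k * - fst q k); nra. }
  exists (fun i => if Nat.eqb i k then xk else x' i).
  intros c Hc. unfold sat. simpl. rewrite Nat.eqb_refl.
  rewrite (rsum_ext k _ (fun i => fst c i * x' i)).
  2:{ intros i Hi. destruct (Nat.eqb_spec i k); [lia|auto]. }
  fold (s c).
  destruct (Rtotal_order (fst c k) 0) as [Hn|[Hn|Hn]].
  - assert (bnd c <= xk) by (apply Hlo; rewrite filter_In, coef_neg_spec; auto).
    pose proof (Hbnd c ltac:(lra)). nra.
  - assert (Hz : In c (fm_elim k L)) by (apply in_fm_elim; left; auto).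
    pose proof (Hsat c Hz). unfold sat in *. fold (s c) in *. rewrite Hn. lra.
  - assert (xk <= bnd c) by (apply Hup; rewrite filter_In, coef_pos_spec; auto).
    pose proof (Hbnd c ltac:(lra)). nra.
Qed.

Theorem farkas k : forall L : list constraint,
  (~ exists x, forall c, In c L -> sat k x c) ->
  exists g h, lin_derivable L (g, h) /\ (forall i, (i < k)%nat -> g i = 0) /\ h < 0.
Proof.
  induction k as [|k IH]; intros L Hinf.
  - apply not_ex_all_not with (n := fun _ : nat => 0) in Hinf.
    apply not_all_ex_not in Hinf as [c Hc].
    apply imply_to_and in Hc as [Hc Hns]. unfold sat in Hns; simpl in Hns.
    exists (fst c), (snd c). repeat split; [destruct c; apply lin_derivable_in; auto|lia|lra].
  - destruct (IH (fm_elim k L)) as [g [h [Hd [Hg Hh]]]].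
    { intros [x' Hx']. apply Hinf, (fm_elim_extend k L x' Hx'). }
    exists g, h. repeat split; auto.
    + apply (lin_derivable_trans L (fm_elim k L)); auto. apply fm_elim_lin_derivable.
    + assert (Hgk : g k = 0).
      { apply (lin_derivable_invariant (fm_elim k L) (fun c => fst c k = 0)) in Hd; auto; simpl.
        - intros g1 h1 g2 h2 H1 H2; simpl in *; lra.
        - intros a g0 h0 _ H1; simpl in *; rewrite H1; ring.
        - apply fm_elim_coef. }
      intros i Hi. destruct (Nat.eq_dec i k) as [->|]; auto. apply Hg; lia.
Qed.

Lemma matvec_lin m A (f g : nat -> R) a b i :
  matvec m A (fun j => a * f j + b * g j) i = a * matvec m A f i + b * matvec m A g i.
Proof. apply rsum_lin. Qed.

Lemma tmatvec_lin n A (f g : nat -> R) a b j :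
  tmatvec n A (fun i => a * f i + b * g i) j = a * tmatvec n A f j + b * tmatvec n A g j.
Proof. apply (rsum_lin n (fun i => A i j)). Qed.

Lemma in_null_lin n m A f g a b : in_null n m A f -> in_null n m A g ->
  in_null n m A (fun j => a * f j + b * g j).
Proof. intros Hf Hg i Hi. rewrite matvec_lin, Hf, Hg by auto. ring. Qed.

Lemma in_null_0 n m A : in_null n m A (fun _ => 0).
Proof.
  intros i _. unfold matvec. rewrite (rsum_ext m _ (fun _ => 0)) by (intros; ring). apply rsum_0.
Qed.

Lemma rsum_tmatvec_null n m A x lam : in_null n m A lam ->
  rsum m (fun j => tmatvec n A x j * lam j) = 0.
Proof.
  intros HN. unfold tmatvec.
  rewrite (rsum_ext m _ (fun j => rsum n (fun i => x i * (A i j * lam j)))).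
  2:{ intros j _. rewrite Rmult_comm, <- rsum_scal. apply rsum_ext; intros; ring. }
  rewrite <- rsum_swap, (rsum_ext n _ (fun _ => 0)), rsum_0; auto.
  intros i Hi. rewrite rsum_scal. fold (matvec m A lam i). rewrite HN by auto. ring.
Qed.

Theorem farkas_dual n m A (c : nat -> R) :
  (~ exists x, forall j, (j < m)%nat -> tmatvec n A x j <= c j) ->
  exists lam, (forall j, (j < m)%nat -> 0 <= lam j) /\ in_null n m A lam /\
              rsum m (fun j => c j * lam j) < 0.
Proof.
  intros Hinf.
  set (L := map (fun j => ((fun i => A i j), c j)) (seq 0 m)).
  destruct (farkas n L) as [g [h [Hd [Hg Hh]]]].
  { intros [x Hx]. apply Hinf. exists x. intros j Hj.
    apply (Hx ((fun i => A i j), c j)). apply in_map_iff. exists j; split; auto.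
    apply in_seq; lia. }
  pose (P := fun cc : constraint => exists lam, (forall j, (j < m)%nat -> 0 <= lam j) /\
     (forall i, fst cc i = matvec m A lam i) /\ snd cc = rsum m (fun j => c j * lam j)).
  assert (HP : P (g, h)).
  { apply (lin_derivable_invariant L P); auto; unfold P; simpl.
    - exists (fun _ => 0). split; [intros; lra|]. split.
      + intros i. unfold matvec. rewrite (rsum_ext m _ (fun _ => 0)), rsum_0; auto; intros; ring.
      + rewrite (rsum_ext m _ (fun _ => 0)), rsum_0; auto; intros; ring.
    - intros g1 h1 g2 h2 [l1 [H1 [H2 H3]]] [l2 [H4 [H5 H6]]].
      exists (fun j => 1 * l1 j + 1 * l2 j). split; [intros j Hj; specialize (H1 j Hj); specialize (H4 j Hj); lra|].
      split; [intros i; rewrite matvec_lin, H2, H5; ring|rewrite rsum_lin, H3, H6; ring].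
    - intros a g0 h0 Ha [l1 [H1 [H2 H3]]]. exists (fun j => a * l1 j + 0 * l1 j).
      split; [intros j Hj; specialize (H1 j Hj); nra|].
      split; [intros i; rewrite matvec_lin, H2; ring|rewrite rsum_lin, H3; ring].
    - intros cc Hcc. apply in_map_iff in Hcc as [j [<- Hj]]. apply in_seq in Hj.
      exists (delta j). split; [intros k _; unfold delta; destruct (Nat.eqb k j); lra|].
      simpl. split; [intros i; unfold matvec|]; rewrite rsum_delta; auto; lia. }
  destruct HP as [lam [H1 [H2 H3]]]. simpl in *.
  exists lam. repeat split; auto; [|lra]. intros i Hi. rewrite <- H2. auto.
Qed.

(** * Linear programming duality for z^* *)

Lemma rmin_idx_le k f j : (j < k)%nat -> rmin_idx k f <= f j.
Proof.
  unfold rmin_idx. intros Hj. assert (Hle : (j <= pred k)%nat) by lia. revert Hle.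
  generalize (pred k) as l. induction l; simpl; intros H.
  - replace j with 0%nat by lia. lra.
  - destruct (Nat.eq_dec j (S l)) as [->|]; [apply Rmin_r|].
    eapply Rle_trans; [apply Rmin_l|apply IHl; lia].
Qed.

Lemma rmin_idx_ge k f t : (1 <= k)%nat -> (forall j, (j < k)%nat -> t <= f j) -> t <= rmin_idx k f.
Proof.
  unfold rmin_idx. intros Hk H. assert (H' : forall j, (j <= pred k)%nat -> t <= f j)
    by (intros; apply H; lia). clear H Hk. revert H'.
  generalize (pred k) as l. induction l; simpl; intros H; [apply H; lia|].
  apply Rmin_glb; [apply IHl; intros; apply H|apply H]; lia.
Qed.

Lemma min_slack_le_ratio n m A u lam x :
  (forall j, (j < m)%nat -> 0 <= lam j) -> in_null n m A lam -> 0 < rsum m lam ->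
  rmin_idx m (fun i => u i - tmatvec n A x i) <= rsum m (fun j => u j * lam j) / rsum m lam.
Proof.
  intros H0 HN Hs. set (mn := rmin_idx m (fun i => u i - tmatvec n A x i)).
  assert (Hle : rsum m (fun j => mn * lam j) <= rsum m (fun j => (u j - tmatvec n A x j) * lam j)).
  { apply rsum_le. intros j Hj. apply Rmult_le_compat_r; auto.
    apply (rmin_idx_le m (fun i => u i - tmatvec n A x i)); auto. }
  rewrite rsum_scal, (rsum_ext m (fun j => (u j - tmatvec n A x j) * lam j)
                                (fun j => u j * lam j - tmatvec n A x j * lam j)),
    rsum_sub, (rsum_tmatvec_null n m A x lam HN) in Hle by (intros; ring).
  apply Rmult_le_reg_r with (rsum m lam); auto.
  unfold Rdiv. rewrite Rmult_assoc, Rinv_l by lra. lra.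
Qed.

Lemma zstar_is_lub n m A u lam :
  (forall j, (j < m)%nat -> 0 <= lam j) -> in_null n m A lam -> 0 < rsum m lam ->
  is_lub (fun z => exists x, z = rmin_idx m (fun i => u i - tmatvec n A x i)) (zstar n m A u).
Proof.
  intros H0 HN Hs. apply Rsup_is_lub; [exists (rmin_idx m (fun i => u i - tmatvec n A (fun _ => 0) i)); eauto|].
  exists (rsum m (fun j => u j * lam j) / rsum m lam).
  intros z [x ->]. apply min_slack_le_ratio; auto.
Qed.

Lemma zstar_le_ratio n m A u lam :
  (forall j, (j < m)%nat -> 0 <= lam j) -> in_null n m A lam -> 0 < rsum m lam ->
  zstar n m A u <= rsum m (fun j => u j * lam j) / rsum m lam.
Proof.
  intros H0 HN Hs. apply (zstar_is_lub n m A u lam H0 HN Hs).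
  intros z [x ->]. apply min_slack_le_ratio; auto.
Qed.

Section Infeasible.

Variables (n m : nat) (A : nat -> nat -> R) (u : nat -> R).
Hypothesis hinfeas : ~ exists x : nat -> R, forall j, (j < m)%nat -> tmatvec n A x j <= u j.

Lemma infeasible_m_pos : (1 <= m)%nat.
Proof. destruct m; [|lia]. exfalso. apply hinfeas. exists (fun _ => 0). intros; lia. Qed.

Lemma zstar_neg : zstar n m A u < 0.
Proof.
  destruct (farkas_dual n m A u hinfeas) as [lam [H0 [HN Hneg]]].
  assert (Hs : 0 < rsum m lam) by (apply (rsum_pos_of_dot_neq0 m lam u); auto; lra).
  pose proof (zstar_le_ratio n m A u lam H0 HN Hs).
  assert (0 < / rsum m lam) by (apply Rinv_0_lt_compat; auto).
  unfold Rdiv in *. nra.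
Qed.

Lemma tau_eq : tau n m A u = - zstar n m A u.
Proof. apply Rabs_left, zstar_neg. Qed.

Lemma tau_pos : 0 < tau n m A u.
Proof. rewrite tau_eq. pose proof zstar_neg. lra. Qed.

Lemma sqrt_m_pos : 0 < sqrt (INR m).
Proof. apply sqrt_lt_R0, lt_0_INR. pose proof infeasible_m_pos. lia. Qed.

Lemma exists_dual_point_below t : zstar n m A u < t ->
  exists l0, (forall j, (j < m)%nat -> 0 <= l0 j) /\ in_null n m A l0 /\ rsum m l0 = 1 /\
    rsum m (fun j => u j * l0 j) < t.
Proof.
  intros Ht.
  destruct (farkas_dual n m A (fun j => u j - t)) as [lam [L0 [LN Lneg]]].
  { intros [x Hx].
    destruct (farkas_dual n m A u hinfeas) as [lam1 [H0 [HN Hneg]]].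
    assert (Hs : 0 < rsum m lam1) by (apply (rsum_pos_of_dot_neq0 m lam1 u); auto; lra).
    assert (t <= zstar n m A u); [|lra].
    apply Rle_trans with (rmin_idx m (fun i => u i - tmatvec n A x i)).
    2:{ apply (zstar_is_lub n m A u lam1 H0 HN Hs). eauto. }
    apply rmin_idx_ge; [apply infeasible_m_pos|]. intros j Hj. specialize (Hx j Hj). lra. }
  assert (Hsl : 0 < rsum m lam) by (apply (rsum_pos_of_dot_neq0 m lam (fun j => u j - t)); auto; lra).
  assert (Hinv : 0 < / rsum m lam) by (apply Rinv_0_lt_compat; auto).
  rewrite (rsum_ext m _ (fun j => u j * lam j - t * lam j)), rsum_sub, rsum_scal in Lneg
    by (intros; ring).
  exists (fun j => / rsum m lam * lam j + 0 * lam j). repeat split.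
  - intros j Hj. specialize (L0 j Hj). nra.
  - apply in_null_lin; auto.
  - rewrite (rsum_ext m _ (fun j => / rsum m lam * lam j)), rsum_scal by (intros; ring).
    field; lra.
  - rewrite rsum_lin. apply Rmult_lt_reg_l with (rsum m lam); auto.
    replace (rsum m lam * (/ rsum m lam * rsum m (fun j => u j * lam j) + 0 * rsum m (fun j => u j * lam j)))
      with (rsum m (fun j => u j * lam j)) by (field; lra). lra.
Qed.

End Infeasible.

(** * The condition number rho *)

Lemma norm1_delta m i : (i < m)%nat -> norm1 m (delta i) = 1.
Proof.
  intros Hi. unfold norm1. rewrite (rsum_ext m _ (fun j => 1 * delta i j)).
  - apply (rsum_delta m (fun _ => 1)); auto.
  - intros j _. unfold delta. destruct (Nat.eqb j i); [rewrite Rabs_R1|rewrite Rabs_R0]; ring.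
Qed.

Lemma exists_max_lt k (f : nat -> R) b : (forall j, (j < k)%nat -> f j < b) ->
  exists K, K < b /\ forall j, (j < k)%nat -> f j <= K.
Proof.
  induction k as [|k IH]; intros H.
  - exists (b - 1). split; [lra|intros; lia].
  - destruct IH as [K [HK HK2]]; [intros; apply H; lia|].
    exists (Rmax K (f k)). split; [apply Rmax_lub_lt; auto|].
    intros j Hj. destruct (Nat.eq_dec j k) as [->|]; [apply Rmax_r|].
    eapply Rle_trans; [apply HK2; lia|apply Rmax_l].
Qed.

Section ConditionNumber.

Variables (n m : nat) (A : nat -> nat -> R).
Hypothesis Hm : (1 <= m)%nat.

Lemma norm12_ge0 M : 0 <= norm12 n m M.
Proof.
  apply (Rsup_ge0 _ (norm2 n (matvec m M (delta 0)))); [|apply norm2_ge0].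
  exists (delta 0). split; auto. apply norm1_delta; lia.
Qed.

Lemma norm12_rank_one_le (c v : nat -> R) K :
  (forall j, (j < m)%nat -> Rabs (c j) * norm2 n v <= K) ->
  norm12 n m (fun i j => c j * v i) <= K.
Proof.
  intros HK. apply Rsup_le.
  - exists (norm2 n (matvec m (fun i j => c j * v i) (delta 0))).
    exists (delta 0). split; auto. apply norm1_delta; lia.
  - intros y [w [Hw ->]].
    rewrite (norm2_ext n _ (fun i => rsum m (fun j => c j * w j) * v i)).
    2:{ intros i _. unfold matvec. rewrite Rmult_comm, <- rsum_scal. apply rsum_ext; intros; ring. }
    rewrite norm2_scal.
    apply Rle_trans with (rsum m (fun j => K * Rabs (w j))).
    + eapply Rle_trans; [apply Rmult_le_compat_r; [apply norm2_ge0|apply rsum_abs_le]|].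
      rewrite Rmult_comm, <- rsum_scal. apply rsum_le. intros j Hj.
      rewrite Rabs_mult. specialize (HK j Hj). pose proof (Rabs_pos (w j)). nra.
    + rewrite rsum_scal. unfold norm1 in Hw. rewrite Hw. lra.
Qed.

Lemma rho_le_norm12 DA v : (exists i, (i < n)%nat /\ v i <> 0) ->
  (forall j, (j < m)%nat -> tmatvec n (fun i j => A i j + DA i j) v j <= 0) ->
  rho n m A <= norm12 n m DA.
Proof.
  intros Hv Hle. unfold rho, Rinf. apply Ropp_le_cancel. rewrite Ropp_involutive.
  apply Rsup_ge.
  - exists DA, v. repeat split; auto. ring.
  - exists 0. intros x [DA' [v' [_ [_ Hx]]]]. pose proof (norm12_ge0 DA'). lra.
Qed.

(* If [a_j . v < rho ||v||] for all [j], the rank-one perturbation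
   [DA = - c v^T] with [c_j = max (a_j . v) 0 / ||v||^2] makes [(A + DA)^T v <= 0]
   while [||DA||_{1,2} < rho]. *)
Lemma rho_witness v : 0 < rho n m A -> (exists i, (i < n)%nat /\ v i <> 0) ->
  exists j, (j < m)%nat /\ rho n m A * norm2 n v <= tmatvec n A v j.
Proof.
  intros hrho Hv. apply NNPP. intros Hno.
  assert (Hlt : forall j, (j < m)%nat -> tmatvec n A v j < rho n m A * norm2 n v).
  { intros j Hj. apply Rnot_le_lt. intros Hle. apply Hno. exists j; auto. }
  pose proof (norm2_pos n v Hv) as Hnv. set (nv := norm2 n v) in *.
  set (c := fun j => Rmax (tmatvec n A v j) 0 / (nv * nv)).
  assert (Hc0 : forall j, 0 <= c j).
  { intros j. unfold c, Rdiv. apply Rmult_le_pos; [apply Rmax_r|].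
    left. apply Rinv_0_lt_compat. nra. }
  assert (Hcnv : forall j, c j * nv = Rmax (tmatvec n A v j) 0 / nv)
    by (intros; unfold c; field; lra).
  destruct (exists_max_lt m (fun j => c j * nv) (rho n m A)) as [K [HK HKc]].
  { intros j Hj. rewrite Hcnv. apply Rmult_lt_reg_r with nv; auto. unfold Rdiv.
    rewrite Rmult_assoc, Rinv_l, Rmult_1_r by lra. apply Rmax_lub_lt; [apply Hlt; auto|nra]. }
  assert (Hn12 : norm12 n m (fun i j => - c j * v i) <= K).
  { apply norm12_rank_one_le. intros j Hj.
    rewrite Rabs_Ropp, Rabs_pos_eq by auto. apply HKc; auto. }
  assert (rho n m A <= norm12 n m (fun i j => - c j * v i)); [|lra].
  apply (rho_le_norm12 _ v Hv). intros j Hj. unfold tmatvec.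
  rewrite (rsum_ext n _ (fun i => A i j * v i - c j * (v i * v i))), rsum_sub, rsum_scal,
    <- norm2_sq by (intros; ring).
  fold (tmatvec n A v j) nv.
  replace (c j * (nv * nv)) with (Rmax (tmatvec n A v j) 0) by (unfold c; field; lra).
  pose proof (Rmax_l (tmatvec n A v j) 0). lra.
Qed.

End ConditionNumber.

(* The system [nu >= 0, sum nu <= T, A nu = - A 1] in the unknown [nu] in R^m. *)
Definition shifted_null_system n m (A : nat -> nat -> R) (T : R) : list constraint :=
  map (fun j => ((fun k => - delta j k), 0)) (seq 0 m) ++
  [((fun _ => 1), T)] ++
  map (fun i => ((fun j => A i j), - rsum m (fun j => A i j))) (seq 0 n) ++
  map (fun i => ((fun j => - A i j), rsum m (fun j => A i j))) (seq 0 n).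

Lemma tmatvec_0 n A j : tmatvec n A (fun _ => 0) j = 0.
Proof. unfold tmatvec. rewrite (rsum_ext n _ (fun _ => 0)), rsum_0 by (intros; ring). reflexivity. Qed.

Lemma rsum_tmatvec n m A x :
  rsum m (fun j => tmatvec n A x j) = rsum n (fun i => rsum m (fun j => A i j) * x i).
Proof.
  unfold tmatvec. rewrite rsum_swap. apply rsum_ext. intros i _.
  rewrite Rmult_comm, <- rsum_scal. apply rsum_ext; intros; ring.
Qed.

Definition shifted_dual_form n m A (T : R) (c : constraint) : Prop :=
  exists (xi : nat -> R) (s : R) (x : nat -> R),
    (forall j, 0 <= xi j) /\ 0 <= s /\
    (forall j, fst c j = - xi j + s + tmatvec n A x j) /\
    snd c = s * T - rsum m (fun j => tmatvec n A x j).

Lemma shifted_dual_form_of_in n m A T c :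
  In c (shifted_null_system n m A T) -> shifted_dual_form n m A T c.
Proof.
  assert (Hnull : rsum m (fun j => tmatvec n A (fun _ => 0) j) = 0)
    by (rewrite (rsum_ext m _ (fun _ => 0)), rsum_0; auto; intros; apply tmatvec_0).
  unfold shifted_null_system, shifted_dual_form. rewrite !in_app_iff.
  intros [Hc|[[<-|[]]|[Hc|Hc]]];
    try (apply in_map_iff in Hc as [k [<- Hk]]; apply in_seq in Hk); simpl.
  - exists (delta k), 0, (fun _ => 0). repeat split; [|lra| |].
    + intros j. unfold delta. destruct (Nat.eqb j k); lra.
    + intros j. rewrite tmatvec_0. ring.
    + rewrite Hnull. ring.
  - exists (fun _ => 0), 1, (fun _ => 0). repeat split; [intros; lra|lra| |].
    + intros j. rewrite tmatvec_0. ring.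
    + rewrite Hnull. ring.
  - exists (fun _ => 0), 0, (delta k). repeat split; [intros; lra|lra| |].
    + intros j. unfold tmatvec. rewrite rsum_delta by lia. ring.
    + rewrite rsum_tmatvec, rsum_delta by lia. ring.
  - exists (fun _ => 0), 0, (fun i => -1 * delta k i + 0 * delta k i).
    repeat split; [intros; lra|lra| |].
    + intros j. rewrite tmatvec_lin. unfold tmatvec. rewrite rsum_delta by lia. ring.
    + rewrite rsum_tmatvec, rsum_lin, rsum_delta by lia. ring.
Qed.

Lemma shifted_dual_form_of_derivable n m A T c :
  lin_derivable (shifted_null_system n m A T) c -> shifted_dual_form n m A T c.
Proof.
  apply lin_derivable_invariant; [| | |apply shifted_dual_form_of_in];
    unfold shifted_dual_form; simpl.
  - exists (fun _ => 0), 0, (fun _ => 0). repeat split; [intros; lra|lra| |].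
    + intros j. rewrite tmatvec_0. ring.
    + rewrite (rsum_ext m _ (fun _ => 0)), rsum_0 by (intros; apply tmatvec_0). ring.
  - intros g1 h1 g2 h2 [x1 [s1 [y1 [A1 [B1 [C1 D1]]]]]] [x2 [s2 [y2 [A2 [B2 [C2 D2]]]]]].
    exists (fun j => x1 j + x2 j), (s1 + s2), (fun i => 1 * y1 i + 1 * y2 i).
    repeat split; [intros j; specialize (A1 j); specialize (A2 j); lra|lra| |].
    + intros j. rewrite tmatvec_lin, C1, C2. ring.
    + rewrite !rsum_tmatvec in *. rewrite rsum_lin, D1, D2. ring.
  - intros a g0 h0 Ha [x1 [s1 [y1 [A1 [B1 [C1 D1]]]]]].
    exists (fun j => a * x1 j), (a * s1), (fun i => a * y1 i + 0 * y1 i).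
    repeat split; [intros j; specialize (A1 j); nra|nra| |].
    + intros j. rewrite tmatvec_lin, C1. ring.
    + rewrite !rsum_tmatvec in *. rewrite rsum_lin, D1. ring.
Qed.

Section BoundedNullPoint.

Variables (n m : nat) (A : nat -> nat -> R).
Hypothesis Hm : (1 <= m)%nat.
Hypothesis hcol : forall j, (j < m)%nat -> norm2 n (fun i => A i j) = 1.
Hypothesis hrho : 0 < rho n m A.

(* A Farkas certificate [(xi, s, x)] of infeasibility would give
   [sum_j a_j . x > s T = s m / rho]; but [sum_j a_j . x <= m ||x||] since the
   columns are unit vectors, and [rho ||x|| <= s] by [rho_witness] applied to [-x]. *)
Lemma shifted_null_system_feasible :
  exists nu, forall c, In c (shifted_null_system n m A (INR m / rho n m A)) -> sat m nu c.
Proof.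
  set (T := INR m / rho n m A).
  assert (HT : 0 <= T).
  { unfold T, Rdiv. apply Rmult_le_pos; [apply pos_INR|left; apply Rinv_0_lt_compat; auto]. }
  apply NNPP. intros Hinf.
  destruct (farkas m _ Hinf) as [g [h [Hd [Hg Hh]]]].
  destruct (shifted_dual_form_of_derivable n m A T _ Hd) as [xi [s [x [Hxi [Hs [Hgx Hhx]]]]]].
  simpl in Hgx, Hhx.
  assert (Hcol : forall j, (j < m)%nat -> - s <= tmatvec n A x j).
  { intros j Hj. specialize (Hg j Hj). rewrite Hgx in Hg. specialize (Hxi j). lra. }
  destruct (classic (exists i, (i < n)%nat /\ x i <> 0)) as [Hx|Hx].
  - destruct (rho_witness n m A Hm (fun i => -1 * x i + 0 * x i)) as [j0 [Hj0 Hrj]]; auto.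
    { destruct Hx as [i [Hi Hxi']]. exists i; split; auto. lra. }
    rewrite tmatvec_lin, (norm2_ext n _ (fun i => -1 * x i)), norm2_scal, Rabs_left in Hrj
      by (intros; ring || lra).
    specialize (Hcol j0 Hj0).
    assert (Hub : rsum m (fun j => tmatvec n A x j) <= rsum m (fun _ => norm2 n x * 1)).
    { apply rsum_le. intros j Hj. unfold tmatvec.
      pose proof (cauchy_schwarz n (fun i => A i j) x) as C. rewrite hcol in C by auto.
      pose proof (abs_bounds (rsum n (fun i => A i j * x i))). lra. }
    rewrite rsum_scal, rsum_1 in Hub.
    assert (INR m * norm2 n x <= s * T); [|lra].
    replace (INR m * norm2 n x) with (rho n m A * norm2 n x * T) by (unfold T; field; lra).
    apply Rmult_le_compat_r; auto. lra.
  - rewrite (rsum_ext m _ (fun _ => 0)), rsum_0 in Hhx.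
    + assert (0 <= s * T) by nra. lra.
    + intros j _. unfold tmatvec. rewrite (rsum_ext n _ (fun _ => 0)), rsum_0; auto.
      intros i Hi. destruct (Req_dec (x i) 0) as [->|E]; [ring|].
      exfalso. apply Hx. eauto.
Qed.

Lemma exists_null_ge1_small :
  exists lb, (forall j, (j < m)%nat -> 1 <= lb j) /\ in_null n m A lb /\
    norm2 m lb <= INR m / rho n m A + sqrt (INR m).
Proof.
  destruct shifted_null_system_feasible as [nu Hnu].
  unfold shifted_null_system in Hnu. repeat setoid_rewrite in_app_iff in Hnu.
  assert (Hnn : forall j, (j < m)%nat -> 0 <= nu j).
  { intros j Hj. specialize (Hnu ((fun k => - delta j k), 0)).
    unfold sat in Hnu; simpl in Hnu.
    rewrite (rsum_ext m _ (fun k => (- nu k) * delta j k)), rsum_delta in Hnu by (intros; ring || auto).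
    enough (- nu j <= 0) by lra. apply Hnu. left. apply in_map_iff. exists j; split; auto.
    apply in_seq; lia. }
  assert (Hsum : rsum m nu <= INR m / rho n m A).
  { specialize (Hnu ((fun _ => 1), INR m / rho n m A) ltac:(right; left; simpl; auto)).
    unfold sat in Hnu; simpl in Hnu. rewrite (rsum_ext m _ nu) in Hnu by (intros; ring). auto. }
  assert (Heq : forall i, (i < n)%nat -> matvec m A nu i = - rsum m (fun j => A i j)).
  { intros i Hi.
    assert (Hi' : In i (seq 0 n)) by (apply in_seq; lia).
    pose proof (Hnu ((fun j => A i j), - rsum m (fun j => A i j))) as S3.
    pose proof (Hnu ((fun j => - A i j), rsum m (fun j => A i j))) as S4.
    specialize (S3 ltac:(right; right; left; apply in_map_iff; eauto)).
    specialize (S4 ltac:(right; right; right; apply in_map_iff; eauto)).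
    unfold sat in S3, S4; simpl in S3, S4.
    rewrite (rsum_ext m _ (fun j => -1 * (A i j * nu j) + 0 * (A i j * nu j))), rsum_add,
      !rsum_scal in S4 by (intros; ring).
    unfold matvec. lra. }
  exists (fun j => 1 * (fun _ => 1) j + 1 * nu j). repeat split.
  - intros j Hj. specialize (Hnn j Hj). lra.
  - intros i Hi. rewrite matvec_lin, Heq by auto. unfold matvec.
    rewrite (rsum_ext m (fun j => A i j * 1) (fun j => A i j)) by (intros; ring). ring.
  - eapply Rle_trans; [apply norm2_triangle|].
    rewrite (norm2_ext m (fun j => 1 * 1) (fun _ => 1)), (norm2_ext m (fun j => 1 * nu j) nu),
      norm2_1 by (intros; ring).
    pose proof (norm2_le_rsum m nu Hnn). lra.
Qed.

End BoundedNullPoint.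

(** * Balls inscribed in D *)

Definition inscribed n m A (u : nat -> R) (r : R) : Prop :=
  exists lc : nat -> R, in_null n m A lc /\
    forall lam, in_null n m A lam -> norm2 m (fun j => lam j - lc j) <= r -> in_D n m A u lam.

Lemma proj_in_null n m A u w :
  (forall i, (i < n)%nat ->
     matvec n (fun i k => rsum m (fun j => A i j * A k j)) w i = matvec m A u i) ->
  in_null n m A (fun j => u j - tmatvec n A w j).
Proof.
  intros hw i Hi. unfold matvec.
  rewrite (rsum_ext m _ (fun j => A i j * u j - rsum n (fun k => w k * (A i j * A k j)))).
  2:{ intros j _. unfold tmatvec. rewrite Rmult_minus_distr_l, <- rsum_scal.
      f_equal. apply rsum_ext; intros; ring. }
  rewrite rsum_sub, <- rsum_swap.
  rewrite (rsum_ext n _ (fun k => rsum m (fun j => A i j * A k j) * w k))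
    by (intros; rewrite rsum_scal; ring).
  specialize (hw i Hi). unfold matvec in hw. rewrite hw. ring.
Qed.

Lemma dot_proj_null n m A u w lam : in_null n m A lam ->
  rsum m (fun j => u j * lam j) = rsum m (fun j => (u j - tmatvec n A w j) * lam j).
Proof.
  intros HN. rewrite (rsum_ext m (fun j => (u j - tmatvec n A w j) * lam j)
                         (fun j => u j * lam j - tmatvec n A w j * lam j)), rsum_sub,
    rsum_tmatvec_null by (auto; intros; ring).
  ring.
Qed.

Lemma exists_null_ge1_of_span n m A :
  (forall y : nat -> R, exists lam : nat -> R,
      (forall j, (j < m)%nat -> 0 <= lam j) /\
      (forall i, (i < n)%nat -> matvec m A lam i = y i)) ->
  exists lb, (forall j, (j < m)%nat -> 1 <= lb j) /\ in_null n m A lb.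
Proof.
  intros hspan. destruct (hspan (fun i => - matvec m A (fun _ => 1) i)) as [lam [Hl0 Hl]].
  exists (fun j => 1 * (fun _ => 1) j + 1 * lam j). split.
  - intros j Hj. specialize (Hl0 j Hj). lra.
  - intros i Hi. rewrite matvec_lin, Hl by auto. ring.
Qed.

Section InscribedBall.

Variables (n m : nat) (A : nat -> nat -> R) (u p : nat -> R).
Hypothesis hinfeas : ~ exists x : nat -> R, forall j, (j < m)%nat -> tmatvec n A x j <= u j.
Hypothesis pN : in_null n m A p.
Hypothesis Hup : forall lam, in_null n m A lam ->
  rsum m (fun j => u j * lam j) = rsum m (fun j => p j * lam j).

(* Moving from the centre [lc] by [r] along [lc] itself and along [p]
   (both in the nullspace) must stay in [D]. *)
Lemma inscribed_center r : inscribed n m A u r -> 0 < r ->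
  exists lc, (forall j, (j < m)%nat -> 0 <= lc j) /\ in_null n m A lc /\ 0 < rsum m lc /\
    norm2 m lc + r <= 1 /\ r * norm2 m p <= - rsum m (fun j => p j * lc j).
Proof.
  intros [lc [HNc Hd]] Hr.
  assert (Hself : norm2 m (fun j => lc j - lc j) <= r)
    by (rewrite (norm2_ext m _ (fun _ => 0)), norm2_0 by (intros; ring); lra).
  destruct (Hd lc HNc Hself) as [_ [L0 [Lneg _]]].
  assert (Hs : 0 < rsum m lc) by (apply (rsum_pos_of_dot_neq0 m lc u); auto; lra).
  assert (Hnc : 0 < norm2 m lc).
  { pose proof (rsum_le_sqrt_norm2 m lc). pose proof (sqrt_pos (INR m)).
    pose proof (norm2_ge0 m lc). destruct (Req_dec (norm2 m lc) 0) as [E|]; [|lra].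
    rewrite E in *. lra. }
  exists lc. repeat split; auto.
  - set (c := r / norm2 m lc).
    destruct (Hd (fun j => (1 + c) * lc j + 0 * lc j)) as [_ [_ [_ Hn1]]].
    + apply in_null_lin; auto.
    + rewrite (norm2_ext m _ (fun j => c * lc j)), norm2_scal, Rabs_pos_eq by
        (intros; ring || (unfold c; apply Rlt_le, Rdiv_lt_0_compat; auto)).
      unfold c. right; field; lra.
    + rewrite (norm2_ext m _ (fun j => (1 + c) * lc j)), norm2_scal, Rabs_pos_eq in Hn1 by
        (intros; ring || (unfold c; assert (0 < r / norm2 m lc) by (apply Rdiv_lt_0_compat; auto); lra)).
      replace ((1 + c) * norm2 m lc) with (norm2 m lc + r) in Hn1 by (unfold c; field; lra). auto.
  - rewrite Hup in Lneg by auto.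
    destruct (Rle_lt_or_eq_dec 0 _ (norm2_ge0 m p)) as [Hp|E]; [|rewrite <- E; lra].
    set (c := r / norm2 m p).
    destruct (Hd (fun j => 1 * lc j + c * p j)) as [_ [_ [Hneg _]]].
    + apply in_null_lin; auto.
    + rewrite (norm2_ext m _ (fun j => c * p j)), norm2_scal, Rabs_pos_eq by
        (intros; ring || (unfold c; apply Rlt_le, Rdiv_lt_0_compat; auto)).
      unfold c. right; field; lra.
    + rewrite Hup, rsum_lin, <- norm2_sq in Hneg by (apply in_null_lin; auto).
      replace (c * (norm2 m p * norm2 m p)) with (r * norm2 m p) in Hneg by (unfold c; field; lra).
      lra.
Qed.

Lemma inscribed_le r : inscribed n m A u r -> 0 < r ->
  r * (norm2 m p + tau n m A u * sqrt (INR m)) <= tau n m A u * sqrt (INR m).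
Proof.
  intros Hr Hr0. destruct (inscribed_center r Hr Hr0) as [lc [L0 [HN [Hs [Hn Hp]]]]].
  pose proof (zstar_le_ratio n m A u lc L0 HN Hs) as Hz.
  rewrite Hup, <- (Ropp_involutive (zstar n m A u)), <- tau_eq in Hz by auto.
  pose proof (tau_pos n m A u hinfeas) as Htau.
  assert (- rsum m (fun j => p j * lc j) <= tau n m A u * rsum m lc).
  { apply Rmult_le_compat_r with (r := rsum m lc) in Hz; [|lra].
    unfold Rdiv in Hz. rewrite Rmult_assoc, Rinv_l in Hz by lra. lra. }
  pose proof (rsum_le_sqrt_norm2 m lc). pose proof (sqrt_pos (INR m)).
  assert (tau n m A u * rsum m lc <= tau n m A u * (sqrt (INR m) * (1 - r))).
  { apply Rmult_le_compat_l; [lra|]. pose proof (norm2_ge0 m lc). nra. }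
  nra.
Qed.

Lemma rstar_is_lub : is_lub (inscribed n m A u) (rstar n m A u).
Proof.
  apply Rsup_is_lub.
  - exists (-1), (fun _ => 0). split; [apply in_null_0|].
    intros lam _ Hle. pose proof (norm2_ge0 m (fun j => lam j - 0)). lra.
  - exists 1. intros r Hr. destruct (Rle_lt_dec r 0); [lra|].
    destruct (inscribed_center r Hr) as [lc [_ [_ [_ [Hn _]]]]]; auto.
    pose proof (norm2_ge0 m lc). lra.
Qed.

Lemma rstar_le :
  rstar n m A u <= tau n m A u * sqrt (INR m) / (norm2 m p + tau n m A u * sqrt (INR m)).
Proof.
  assert (Hts : 0 < tau n m A u * sqrt (INR m))
    by (apply Rmult_lt_0_compat; [apply (tau_pos n m A u)|apply (sqrt_m_pos n m A u)]; auto).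
  pose proof (norm2_ge0 m p).
  apply rstar_is_lub. intros r Hr. destruct (Rle_lt_dec r 0).
  - apply Rle_trans with 0; [lra|]. apply Rlt_le, Rdiv_lt_0_compat; lra.
  - apply Rmult_le_reg_r with (norm2 m p + tau n m A u * sqrt (INR m)); [lra|].
    unfold Rdiv. rewrite Rmult_assoc, Rinv_l by lra.
    pose proof (inscribed_le r Hr). lra.
Qed.

(* The ball of radius [r] around [(1 - r (K+1)) l0 + r lb] lies in [D]. *)
Lemma inscribed_of_interior l0 lb K r :
  (forall j, (j < m)%nat -> 0 <= l0 j) -> in_null n m A l0 -> norm2 m l0 <= 1 ->
  (forall j, (j < m)%nat -> 1 <= lb j) -> in_null n m A lb -> norm2 m lb <= K ->
  0 <= r -> r * (K + 1) <= 1 ->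
  (1 - r * (K + 1)) * rsum m (fun j => p j * l0 j) + r * (K + 1) * norm2 m p < 0 ->
  inscribed n m A u r.
Proof.
  intros L0 N0 Nm0 Lb Nb Nmb Hr Hc Hneg.
  pose proof (norm2_ge0 m p). pose proof (norm2_ge0 m lb).
  set (a := 1 - r * (K + 1)).
  exists (fun j => a * l0 j + r * lb j). split; [apply in_null_lin; auto|].
  intros lam HN Hd. set (d := fun j => lam j - (a * l0 j + r * lb j)) in *.
  assert (Elam : forall j, lam j = 1 * (a * l0 j + r * lb j) + 1 * d j) by (intros; unfold d; ring).
  split; [auto|split; [|split]].
  - intros j Hj. pose proof (abs_le_norm2 m d j Hj). pose proof (abs_bounds (d j)).
    rewrite Elam. specialize (L0 j Hj). specialize (Lb j Hj).
    assert (0 <= a * l0 j) by (unfold a; nra). nra.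
  - rewrite Hup, (rsum_ext m _ (fun j => p j * (1 * (a * l0 j + r * lb j) + 1 * d j))),
      !rsum_lin by (auto || (intros; rewrite <- Elam; auto)).
    pose proof (cauchy_schwarz m p lb). pose proof (cauchy_schwarz m p d).
    pose proof (abs_bounds (rsum m (fun j => p j * lb j))).
    pose proof (abs_bounds (rsum m (fun j => p j * d j))).
    assert (r * rsum m (fun j => p j * lb j) <= r * (norm2 m p * K))
      by (apply Rmult_le_compat_l; nra).
    fold a in Hneg. nra.
  - rewrite (norm2_ext m lam (fun j => (a * l0 j + r * lb j) + d j)) by (intros; unfold d; ring).
    eapply Rle_trans; [apply norm2_triangle|].
    eapply Rle_trans; [apply Rplus_le_compat_r, norm2_triangle|].
    rewrite !norm2_scal, !Rabs_pos_eq by (unfold a; lra).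
    assert (a * norm2 m l0 <= a) by (unfold a; nra).
    assert (r * norm2 m lb <= r * K) by (apply Rmult_le_compat_l; lra).
    unfold a in *. lra.
Qed.

Lemma inscribed_of_small lb K r :
  (forall j, (j < m)%nat -> 1 <= lb j) -> in_null n m A lb -> norm2 m lb <= K ->
  0 <= r -> r * (K + 1) * (norm2 m p + tau n m A u) < tau n m A u ->
  inscribed n m A u r.
Proof.
  intros Lb Nb Nmb Hr Hsmall.
  pose proof (norm2_ge0 m p). pose proof (norm2_ge0 m lb).
  pose proof (tau_pos n m A u hinfeas) as Htau.
  set (c := r * (K + 1)) in *.
  assert (Hc0 : 0 <= c) by (unfold c; nra).
  assert (Hc1 : c < 1) by nra.
  set (a := c * norm2 m p / (1 - c)).
  assert (Ha : a * (1 - c) = c * norm2 m p) by (unfold a; field; lra).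
  destruct (exists_dual_point_below n m A u hinfeas (- a)) as [l0 [L0 [N0 [S0 U0]]]].
  { rewrite <- (Ropp_involutive (zstar n m A u)), <- tau_eq by auto.
    apply Ropp_lt_contravar. apply Rmult_lt_reg_r with (1 - c); nra. }
  apply (inscribed_of_interior l0 lb K r); auto; fold c.
  - rewrite <- S0. apply norm2_le_rsum; auto.
  - lra.
  - rewrite <- Hup by auto. nra.
Qed.

Lemma rstar_ge lb K :
  (forall j, (j < m)%nat -> 1 <= lb j) -> in_null n m A lb -> norm2 m lb <= K ->
  tau n m A u / ((K + 1) * (norm2 m p + tau n m A u)) <= rstar n m A u.
Proof.
  intros Lb Nb Nmb. pose proof (norm2_ge0 m p). pose proof (norm2_ge0 m lb).
  pose proof (tau_pos n m A u hinfeas) as Htau.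
  assert (HD : 0 < (K + 1) * (norm2 m p + tau n m A u)) by nra.
  apply (lub_ge_of_interval _ _ _ rstar_is_lub); [apply Rdiv_lt_0_compat; auto|].
  intros r [Hr0 Hr]. apply (inscribed_of_small lb K r); auto.
  apply Rmult_lt_compat_r with (r := (K + 1) * (norm2 m p + tau n m A u)) in Hr; auto.
  unfold Rdiv in Hr. rewrite Rmult_assoc, Rinv_l in Hr by lra. lra.
Qed.

Lemma rstar_pos lb : (forall j, (j < m)%nat -> 1 <= lb j) -> in_null n m A lb ->
  0 < rstar n m A u.
Proof.
  intros Lb Nb. eapply Rlt_le_trans; [|apply (rstar_ge lb (norm2 m lb)); auto; lra].
  pose proof (tau_pos n m A u hinfeas). pose proof (norm2_ge0 m p). pose proof (norm2_ge0 m lb).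
  apply Rdiv_lt_0_compat; nra.
Qed.

End InscribedBall.

Theorem lemma12 (n m : nat) (A : nat -> nat -> R) (u : nat -> R)
  (hcol : forall j, (j < m)%nat -> norm2 n (fun i => A i j) = 1)
  (hspan : forall y : nat -> R, exists lam : nat -> R,
      (forall j, (j < m)%nat -> 0 <= lam j) /\
      (forall i, (i < n)%nat -> matvec m A lam i = y i))
  (hinfeas : ~ exists x : nat -> R, forall j, (j < m)%nat -> tmatvec n A x j <= u j)
  (w : nat -> R)
  (hw : forall i, (i < n)%nat ->
      matvec n (fun i k => rsum m (fun j => A i j * A k j)) w i = matvec m A u i) :
  let PAu := fun j => u j - tmatvec n A w j in
  norm2 m PAu / (tau n m A u * sqrt (INR m)) + 1 <= / rstar n m A u /\
  (0 < rho n m A ->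
   / rstar n m A u <=
   (norm2 m PAu / tau n m A u + 1) * (INR m / rho n m A + sqrt (INR m) + 1)).
Proof.
  intros p.
  pose proof (proj_in_null n m A u w hw) as pN.
  pose proof (dot_proj_null n m A u w) as Hup.
  pose proof (norm2_ge0 m p).
  pose proof (tau_pos n m A u hinfeas).
  pose proof (sqrt_m_pos n m A u hinfeas).
  destruct (exists_null_ge1_of_span n m A hspan) as [lb [Lb Nb]].
  pose proof (rstar_pos n m A u p hinfeas pN Hup lb Lb Nb).
  split.
  - replace (norm2 m p / (tau n m A u * sqrt (INR m)) + 1)
      with (/ (tau n m A u * sqrt (INR m) / (norm2 m p + tau n m A u * sqrt (INR m))))
      by (field; nra).
    apply Rinv_le_contravar; auto. apply rstar_le; auto.
  - intros hrho.
    destruct (exists_null_ge1_small n m A (infeasible_m_pos n m A u hinfeas) hcol hrho)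
      as [lb2 [Lb2 [Nb2 Nmb2]]].
    set (K := INR m / rho n m A + sqrt (INR m)) in *.
    assert (HK : 0 <= K) by (pose proof (norm2_ge0 m lb2); lra).
    replace (INR m / rho n m A + sqrt (INR m) + 1) with (K + 1) by (unfold K; ring).
    replace ((norm2 m p / tau n m A u + 1) * (K + 1))
      with (/ (tau n m A u / ((K + 1) * (norm2 m p + tau n m A u)))) by (field; nra).
    apply Rinv_le_contravar; [apply Rdiv_lt_0_compat; nra|].
    apply (rstar_ge n m A u p hinfeas pN Hup lb2); auto.
Qed.
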